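(* Let $X$ be a shift space over $\mathcal{A}$ and let $\sigma:\mathcal{A}^*\to\mathcal{A}^*$ be a return morphism that is planar preserving from $(\preceq^L,\preceq^R)$ to $(\le^L,\le^R)$. A word $v\in\mathcal{L}(X)$ is planar for $(\preceq^L,\preceq^R)$ in $X$ if and only if every extended image of $v$ under $\sigma$ is planar for $(\le^L,\le^R)$ in $\sigma\cdot X$.
   Context: Shift spaces over $\mathcal{A}$: nonempty closed shift-invariant $X\subseteq\mathcal{A}^{\mathbb{Z}}$ with language $\mathcal{L}(X)$ containing all letters; $E_X(v)=\{(a,b):avb\in\mathcal{L}(X)\}$. Morphisms are non-erasing; $\sigma\cdot X=\{S^k\sigma(x):x\in X,0\le k<|\sigma(x_0)|\}$. A return morphism for $w\in\mathcal{A}^+$ is an injective morphism with $\sigma(a)w$ containing exactly two occurrences of $w$, as proper prefix and proper suffix, for each letter $a$ ($w$ of maximal length if unspecified). $\mathcal{A}^L_{\sigma,s}=\{a:\sigma(a)\in\mathcal{A}^+s\}$, $\mathcal{A}^R_{\sigma,p}=\{a:\sigma(a)w\in p\mathcal{A}^+\}$; $\varphi^L_{\sigma,s}(a)$ is the letter $a'$ with $\sigma(a)\in\mathcal{A}^*a's$, $\varphi^R_{\sigma,p}(b)$ the letter $b'$ with $\sigma(b)w\in pb'\mathcal{A}^*$; $\mathcal{T}^L(\sigma)$, $\mathcal{T}^R(\sigma)$ are the sets of longest common suffixes of $\sigma(a),\sigma(b)$ and longest common prefixes of $\sigma(a)w,\sigma(b)w$, over $a\ne b$. For $v\in\mathcal{L}(X)$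 and $s,p$ let $E_{X,s,p}(v)=E_X(v)\cap(\mathcal{A}^L_{\sigma,s}\times\mathcal{A}^R_{\sigma,p})$. A word $u\in\mathcal{L}(\sigma\cdot X)$ is an extended image of $v$ under $\sigma$ if $u=s\sigma(v)p$ with $s\in\mathcal{A}^*$, $p\in w\mathcal{A}^*$ and $E_{X,s,p}(v)\ne\emptyset$. For total orders $\le^L,\le^R$, a word $u$ of a shift $Y$ is planar for $(\le^L,\le^R)$ if for all $(a_1,b_1),(a_2,b_2)\in E_Y(u)$, $a_1<^La_2$ implies $b_1\le^Rb_2$. A partial map $\varphi$ is order preserving from $\preceq$ to $\le$ if $x\prec y$ implies $\varphi(x)\le\varphi(y)$ on its domain; $\sigma$ is planar preserving from $(\preceq^L,\preceq^R)$ to $(\le^L,\le^R)$ if every $\varphi^L_{\sigma,s}$ ($s\in\mathcal{T}^L(\sigma)$) is order preserving from $\preceq^L$ to $\le^L$ and every $\varphi^R_{\sigma,p}$ ($p\in\mathcal{T}^R(\sigma)$) is order preserving from $\preceq^R$ to $\le^R$. *)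

From HB Require Import structures.
From mathcomp Require Import all_boot all_order all_algebra.
Set Implicit Arguments. Unset Strict Implicit. Unset Printing Implicit Defensive.
Import GRing.Theory Num.Theory.

Definition win {A : Type} (x : int -> A) (i : int) (n : nat) : seq A :=
  [seq x (i + (j%:Z))%R | j <- iota 0 n].

Definition shiftZ {A : Type} (x : int -> A) : int -> A := fun i => x (i + 1)%R.

Definition lang {A : Type} (X : (int -> A) -> Prop) (w : seq A) : Prop :=
  exists x, X x /\ exists i, win x i (size w) = w.

(* nonempty, shift invariant (S X = X), closed in the product topology,
   and every letter occurs *)
Definition is_shift_space (A : finType) (X : (int -> A) -> Prop) : Prop :=
  [/\ (exists x, X x),
      (forall x, X (shiftZ x) <-> X x),
      (forall x, (forall n : nat, exists y, X y /\
            win y (- (n%:Z))%R (2 * n).+1 = win x (- (n%:Z))%R (2 * n).+1) -> X x)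
    & (forall a : A, lang X [:: a])].

Definition ext {A : Type} (X : (int -> A) -> Prop) (v : seq A) (a b : A) : Prop :=
  lang X (a :: v ++ [:: b]).

Definition mword {A : Type} (sigma : A -> seq A) (u : seq A) : seq A :=
  flatten (map sigma u).

Definition non_erasing {A : Type} (sigma : A -> seq A) : Prop :=
  forall a, sigma a <> [::].

Definition occurrences {A : eqType} (w u : seq A) : nat :=
  count (fun i => take (size w) (drop i u) == w) (iota 0 (size u).+1).

Definition is_return_morphism {A : eqType} (sigma : A -> seq A) (w : seq A) : Prop :=
  [/\ w != [::], non_erasing sigma, injective (mword sigma)
    & forall a, [/\ occurrences w (sigma a ++ w) = 2%N,
                    prefix w (sigma a ++ w), suffix w (sigma a ++ w)
                  & size w < size (sigma a ++ w)]].

Definition AL {A : Type} (sigma : A -> seq A) (s : seq A) (a : A) : Prop :=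
  exists u, u <> [::] /\ sigma a = u ++ s.
Definition AR {A : Type} (sigma : A -> seq A) (w p : seq A) (a : A) : Prop :=
  exists u, u <> [::] /\ sigma a ++ w = p ++ u.

(* phi^L_{sigma,s}(a): the letter a' with sigma(a) in A^* a' s (meaningful on AL) *)
Definition phiL {A : Type} (sigma : A -> seq A) (s : seq A) (a : A) : A :=
  nth a (sigma a) (size (sigma a) - size s).-1.
(* phi^R_{sigma,p}(b): the letter b' with sigma(b) w in p b' A^* (meaningful on AR) *)
Definition phiR {A : Type} (sigma : A -> seq A) (w p : seq A) (b : A) : A :=
  nth b (sigma b ++ w) (size p).

Fixpoint lcp {A : eqType} (s t : seq A) : seq A :=
  match s, t with
  | x :: s', y :: t' => if x == y then x :: lcp s' t' else [::]
  | _, _ => [::]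
  end.
Definition lcs {A : eqType} (s t : seq A) : seq A := rev (lcp (rev s) (rev t)).

Definition TL {A : eqType} (sigma : A -> seq A) (s : seq A) : Prop :=
  exists a b, a != b /\ s = lcs (sigma a) (sigma b).
Definition TR {A : eqType} (sigma : A -> seq A) (w p : seq A) : Prop :=
  exists a b, a != b /\ p = lcp (sigma a ++ w) (sigma b ++ w).

Definition total_order {A : Type} (r : rel A) : Prop :=
  [/\ reflexive r, antisymmetric r, transitive r & total r].

Definition order_preserving_on {A : eqType} (dom : A -> Prop) (f : A -> A)
  (pre le : rel A) : Prop :=
  forall x y, dom x -> dom y -> pre x y -> x != y -> le (f x) (f y).

Definition planar_preserving {A : eqType} (sigma : A -> seq A) (w : seq A)
  (preL preR leL leR : rel A) : Prop :=
  (forall s, TL sigma s -> order_preserving_on (AL sigma s) (phiL sigma s) preL leL) /\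
  (forall p, TR sigma w p -> order_preserving_on (AR sigma w p) (phiR sigma w p) preR leR).

Definition planar {A : eqType} (Y : (int -> A) -> Prop) (leL leR : rel A) (u : seq A)
  : Prop :=
  forall a1 b1 a2 b2, ext Y u a1 b1 -> ext Y u a2 b2 ->
    leL a1 a2 -> a1 != a2 -> leR b1 b2.

(* sigma . X = { S^k sigma(x) : x in X, 0 <= k < |sigma(x_0)| }, where sigma(x) has
   sigma(x_0) starting at position 0.  y = S^k sigma(x) is described by its windows:
   sigma(x_{-m} ... x_m) sits in y starting at position -(k + |sigma(x_{-m}...x_{-1})|). *)
Definition sigma_dot {A : Type} (sigma : A -> seq A) (X : (int -> A) -> Prop)
  : (int -> A) -> Prop :=
  fun y => exists x, X x /\ exists k : nat, k < size (sigma (x 0%R)) /\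
    forall m : nat,
      let pre := mword sigma (win x (- (m%:Z))%R m) in
      let full := mword sigma (win x (- (m%:Z))%R (2 * m).+1) in
      win y (- ((k + size pre)%:Z))%R (size full) = full.

Definition ext_image {A : eqType} (sigma : A -> seq A) (w : seq A)
  (X : (int -> A) -> Prop) (v u : seq A) : Prop :=
  exists s p, (exists q, p = w ++ q) /\ u = s ++ mword sigma v ++ p /\
    (exists a b, ext X v a b /\ AL sigma s a /\ AR sigma w p b) /\
    lang (sigma_dot sigma X) u.

From mathcomp Require Import all_boot all_order all_algebra zify.
Set Implicit Arguments. Unset Strict Implicit. Unset Printing Implicit Defensive.

(* A return morphism is recognizable: [w] occurs in [sigma(a) w] only as a prefix
   and a suffix, so every occurrence of [w] in [sigma(Z) w] sits at a cut between
   images of letters, and the images of letters form a suffix code.  Hence the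
   extensions (c, d) in [sigma . X] of an extended image [s sigma(v) p] are exactly
   the letters with [c s] a suffix of [sigma(a)] and [p d] a prefix of [sigma(b) w]
   for some (a, b) in E_X(v), i.e. c = phi^L_s(a) and d = phi^R_p(b).  Planarity is
   transported by the order preserving maps phi^L_s, phi^R_p; conversely, two
   extensions (a1, b1), (a2, b2) of [v] violating planarity produce, with [s] and
   [p] the longest common suffix of [sigma a1], [sigma a2] and longest common
   prefix of [sigma b1 w], [sigma b2 w], an extended image that is not planar. *)

Lemma cat_split (T : Type) (s1 s2 t1 t2 : seq T) :
  s1 ++ s2 = t1 ++ t2 -> size s1 <= size t1 ->
  exists m, t1 = s1 ++ m /\ s2 = m ++ t2.
Proof.
elim: s1 t1 => [|x s1 IH] t1 /=; first by move=> -> _; exists t1.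
case: t1 => [|y t1] //= [-> E] h.
by have [m [-> ->]] := IH _ E h; exists m.
Qed.

Lemma catl_inj (T : Type) (s t1 t2 : seq T) : s ++ t1 = s ++ t2 -> t1 = t2.
Proof. by elim: s => //= x s IH [] /IH. Qed.

Lemma catr_inj (T : Type) (s t1 t2 : seq T) : t1 ++ s = t2 ++ s -> t1 = t2.
Proof. by move=> /(congr1 rev); rewrite !rev_cat => /catl_inj /(congr1 rev); rewrite !revK. Qed.

Section LongestCommonPrefix.
Variable T : eqType.

Lemma lcp_catl (l x y : seq T) : lcp (l ++ x) (l ++ y) = l ++ lcp x y.
Proof. by elim: l => //= z l ->; rewrite eqxx. Qed.

Lemma lcp_cons_neq (p x y : seq T) c1 c2 :
  c1 != c2 -> lcp (p ++ c1 :: x) (p ++ c2 :: y) = p.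
Proof. by move=> h; rewrite lcp_catl /= (negbTE h) cats0. Qed.

Lemma lcs_rcons_neq (g1 g2 s : seq T) c1 c2 :
  c1 != c2 -> lcs (g1 ++ c1 :: s) (g2 ++ c2 :: s) = s.
Proof.
by move=> h; rewrite /lcs !rev_cat !rev_cons !cat_rcons lcp_cons_neq // revK.
Qed.

Lemma lcp_split (x y : seq T) : exists x' y',
  [/\ x = lcp x y ++ x', y = lcp x y ++ y' &
      [\/ x' = [::], y' = [::] |
          exists c1 c2 x'' y'', [/\ c1 != c2, x' = c1 :: x'' & y' = c2 :: y'']]].
Proof.
elim: x y => [|a x IH] [|b y] /=.
- by exists [::], [::]; split => //; apply: Or31.
- by exists [::], (b :: y); split => //; apply: Or31.
- by exists (a :: x), [::]; split => //; apply: Or32.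
case: eqVneq => [<-|hab].
  by have [x' [y' [E1 E2 H]]] := IH y; exists x', y'; rewrite /= -E1 -E2.
by exists (a :: x), (b :: y); split => //; apply: Or33; exists a, b, x, y.
Qed.

End LongestCommonPrefix.

Lemma size_win (T : Type) (x : int -> T) i n : size (win x i n) = n.
Proof. by rewrite /win size_map size_iota. Qed.

Lemma win_cat (T : Type) (x : int -> T) i n1 n2 :
  win x i (n1 + n2) = win x i n1 ++ win x (i + n1%:Z)%R n2.
Proof.
rewrite /win iotaD map_cat; congr (_ ++ _).
rewrite add0n -{1}[n1]addn0 iotaDl -map_comp; apply: eq_map => j /=.
by congr x; rewrite PoszD GRing.addrA.
Qed.

Lemma win_factor (T : Type) (y : int -> T) (b i : int) (N n : nat) :
  (b <= i)%R -> (i + n%:Z <= b + N%:Z)%R ->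
  exists L R, win y b N = L ++ win y i n ++ R.
Proof.
move=> h1 h2; set d := absz (i - b)%R.
have -> : N = d + (n + (N - d - n)) by rewrite /d; lia.
rewrite !win_cat; have -> : (b + d%:Z = i)%R by rewrite /d; lia.
by eexists; eexists.
Qed.

Lemma lang_win (T : Type) (Y : (int -> T) -> Prop) y i n : Y y -> lang Y (win y i n).
Proof. by move=> Yy; exists y; split => //; exists i; rewrite size_win. Qed.

Lemma lang_factor (T : Type) (Y : (int -> T) -> Prop) L t R :
  lang Y (L ++ t ++ R) -> lang Y t.
Proof.
move=> [y [Yy [i E]]]; exists y; split => //; exists (i + (size L)%:Z)%R.
move: E; rewrite !size_cat !win_cat => E.
have [m [E1 E2]] := cat_split E (eq_leq (size_win _ _ _)).
have m0 : m = [::] by apply/size0nil; move/(congr1 size): E1; rewrite size_cat size_win; lia.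
rewrite m0 /= in E2; have [m' [E3 _]] := cat_split E2 (eq_leq (size_win _ _ _)).
have m'0 : m' = [::] by apply/size0nil; move/(congr1 size): E3; rewrite size_cat size_win; lia.
by rewrite [RHS]E3 m'0 cats0.
Qed.

Section Morphism.
Variables (A : Type) (sigma : A -> seq A).
Local Notation ms := (mword sigma).

Lemma mword_cat s t : ms (s ++ t) = ms s ++ ms t.
Proof. by rewrite /mword map_cat flatten_cat. Qed.

Lemma mword_cons a s : ms (a :: s) = sigma a ++ ms s.
Proof. by []. Qed.

Lemma mword1 a : ms [:: a] = sigma a.
Proof. by rewrite /mword /= cats0. Qed.

Lemma mword_rcons s a : ms (rcons s a) = ms s ++ sigma a.
Proof. by rewrite -cats1 mword_cat mword1. Qed.

Hypothesis sigma_non_erasing : non_erasing sigma.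

Lemma size_sigma_gt0 a : 0 < size (sigma a).
Proof. by have := @sigma_non_erasing a; case: (sigma a). Qed.

Lemma size_mword s : size s <= size (ms s).
Proof.
elim: s => //= a s IH; rewrite mword_cons size_cat.
by have := size_sigma_gt0 a; lia.
Qed.

Lemma size_mword_win x i n : n <= size (ms (win x i n)).
Proof. by have := size_mword (win x i n); rewrite size_win. Qed.

Lemma lang_sigma_dot_factor X t : lang (sigma_dot sigma X) t ->
  exists Z L R, lang X Z /\ ms Z = L ++ t ++ R.
Proof.
move=> [y [[x [Xx [k [klt W]]]] [i Wt]]].
have [m hm] : exists m, (absz i + size t <= m)%N by exists (absz i + size t)%N.
set Z := win x (- m%:Z)%R (2 * m).+1.
set pre := ms (win x (- m%:Z)%R m); set post := ms (win x 1%R m).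
have Wm : win y (- (k + size pre)%:Z)%R (size (ms Z)) = ms Z := W m.
have EZ : ms Z = pre ++ sigma (x 0%R) ++ post.
  rewrite /Z; have -> : (2 * m).+1 = m + (1 + m) by lia.
  rewrite !win_cat !mword_cat; have -> : (- m%:Z + m%:Z = 0)%R by lia.
  by rewrite /win /= GRing.addr0 GRing.add0r mword1.
have spre : m <= size pre by apply: size_mword_win.
have spost : m <= size post by apply: size_mword_win.
have sx := size_sigma_gt0 (x 0%R).
have [L [R E]] := @win_factor _ y (- (k + size pre)%:Z)%R i (size (ms Z)) (size t)
  ltac:(lia) ltac:(rewrite EZ !size_cat; lia).
by exists Z, L, R; split; [exact: lang_win | rewrite -Wm E Wt].
Qed.

(* [sigma_image x] is the point [sigma(x)] of [sigma . X], with [sigma(x_0)]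
   starting at position 0; letters are read off long enough windows of [x]. *)
Definition sigma_image (x : int -> A) (z : int) : A :=
  if (0 <= z)%R then nth (x 0%R) (ms (win x 0 (absz z).+1)) (absz z)
  else let N := absz z in
       let pre := ms (win x (- N%:Z)%R N) in nth (x 0%R) pre (size pre - N).

Lemma nth_mword_win_prefix x i n1 n2 j d :
  j < size (ms (win x i n1)) -> j < size (ms (win x i n2)) ->
  nth d (ms (win x i n1)) j = nth d (ms (win x i n2)) j.
Proof.
wlog le12 : n1 n2 / n1 <= n2 => [hwlog h1 h2|h1 _].
  by have [/hwlog->|/ltnW/hwlog->] := leqP n1 n2.
by rewrite -(subnKC le12) win_cat mword_cat nth_cat h1.
Qed.

Lemma nth_mword_win_suffix x n1 n2 N d :
  let pre n := ms (win x (- n%:Z)%R n) in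
  N <= size (pre n1) -> N <= size (pre n2) ->
  nth d (pre n1) (size (pre n1) - N) = nth d (pre n2) (size (pre n2) - N).
Proof.
move=> pre; rewrite {}/pre; wlog le12 : n1 n2 / n1 <= n2 => [hwlog h1 h2|h1 _].
  by have [/hwlog->|/ltnW/hwlog->] := leqP n1 n2.
rewrite -(subnK le12) win_cat.
have -> : (- ((n2 - n1 + n1)%:Z) + (n2 - n1)%:Z = - n1%:Z)%R by lia.
rewrite mword_cat size_cat nth_cat ifF; last by lia.
by congr nth; lia.
Qed.

Lemma win_sigma_image x m :
  let pre := ms (win x (- m%:Z)%R m) in
  let full := ms (win x (- m%:Z)%R (2 * m).+1) in
  win (sigma_image x) (- (size pre)%:Z)%R (size full) = full.
Proof.
move=> pre full.
have Efull : full = pre ++ ms (win x 0 m.+1).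
  rewrite /full; have -> : (2 * m).+1 = m + m.+1 by lia.
  by rewrite win_cat mword_cat; have -> : (- m%:Z + m%:Z = 0)%R by lia.
set post := ms (win x 0 m.+1) in Efull.
apply: (@eq_from_nth _ (x 0%R)); first by rewrite size_win.
rewrite size_win Efull size_cat => j hj.
rewrite /win (nth_map 0%N) ?size_iota // nth_iota // add0n nth_cat /sigma_image.
have [hjp|hjp] := ltnP j (size pre).
  rewrite ifF; last by lia.
  have -> : absz (- (size pre)%:Z + j%:Z)%R = (size pre - j)%N by lia.
  rewrite [X in _ = nth _ _ X](_ : j = size pre - (size pre - j)); last by lia.
  by apply: nth_mword_win_suffix; [exact: size_mword_win | exact: leq_subr].
rewrite ifT; last by lia.
have -> : absz (- (size pre)%:Z + j%:Z)%R = (j - size pre)%N by lia.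
by apply: nth_mword_win_prefix; [have := size_mword_win x 0 (j - size pre).+1 | rewrite -/post]; lia.
Qed.

Lemma sigma_image_in X x : X x -> sigma_dot sigma X (sigma_image x).
Proof.
move=> Xx; exists x; split => //; exists 0; split; first exact: size_sigma_gt0.
by move=> m /=; rewrite add0n win_sigma_image.
Qed.

Lemma lang_sigma_dot_mword_win X x i n : X x -> lang (sigma_dot sigma X) (ms (win x i n)).
Proof.
move=> Xx; pose m := (absz i + n)%N.
have [L [R E]] := @win_factor _ x (- m%:Z)%R i ((2 * m).+1) n
  ltac:(rewrite /m; lia) ltac:(rewrite /m; lia).
apply: (@lang_factor _ _ (ms L) _ (ms R)).
by rewrite -!mword_cat -E -win_sigma_image; exact/lang_win/sigma_image_in.
Qed.

End Morphism.

Lemma return_morphism_non_erasing (A : eqType) (sigma : A -> seq A) w :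
  is_return_morphism sigma w -> non_erasing sigma.
Proof. by case. Qed.

Section ReturnMorphism.
Variables (A : eqType) (sigma : A -> seq A) (w : seq A).
Hypothesis sigma_return : is_return_morphism sigma w.
Local Notation ms := (mword sigma).
Local Notation sigma_non_erasing := (return_morphism_non_erasing sigma_return).
Local Notation size_sigma_gt0 := (size_sigma_gt0 sigma_non_erasing).

Lemma sigma_inj : injective sigma.
Proof.
case: sigma_return => _ _ ms_inj _ a b E.
by have [] : [:: a] = [:: b] by apply: ms_inj; rewrite !mword1.
Qed.

Lemma return_occurrence a t : take (size w) (drop t (sigma a ++ w)) = w ->
  t = 0 \/ t = size (sigma a).
Proof.
case: sigma_return => wne _ _ /(_ a) [Hocc Hpre _ _] Ht.
have [->|t0] := eqVneq t 0; first by left.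
have [->|t1] := eqVneq t (size (sigma a)); first by right.
exfalso; have sa0 := size_sigma_gt0 a.
move: Hocc Ht Hpre; set u := sigma a ++ w => Hocc Ht Hpre.
have tle : t <= size u.
  rewrite leqNgt; apply/negP => h; move: Ht.
  by rewrite drop_oversize ?(ltnW h) //= => E; move: wne; rewrite -E.
set f := fun i => take (size w) (drop i u) == w.
have o0 : f 0 by move/prefixP: Hpre => [r Er]; rewrite /f Er drop0 take_size_cat.
have o1 : f (size (sigma a)) by rewrite /f /u drop_size_cat // take_size.
have o2 : f t by rewrite /f Ht.
have : size [:: 0; size (sigma a); t] <= size (filter f (iota 0 (size u).+1)).
  apply: uniq_leq_size; first by rewrite /= !inE; move: t0 t1 sa0; clear; lia.
  move=> i; rewrite !inE mem_filter mem_iota => /or3P [] /eqP ->.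
  1-3: by apply/and3P; split => //; rewrite /u size_cat; lia.
by rewrite size_filter [count _ _]Hocc.
Qed.

Lemma no_inner_occurrence a q L R : sigma a ++ w ++ q = L ++ w ++ R ->
  0 < size L -> size L < size (sigma a) -> False.
Proof.
move=> E h0 h1.
have : take (size w) (drop (size L) (sigma a ++ w ++ q)) = w.
  by rewrite E drop_size_cat // take_size_cat.
rewrite catA drop_cat size_cat ifT; last by lia.
rewrite take_cat size_drop size_cat ifT; last by lia.
by move/return_occurrence; lia.
Qed.

Lemma mword_cat_return r : exists q, ms r ++ w = w ++ q.
Proof.
elim: r => [|a r [q IH]]; first by exists [::]; rewrite cats0.
case: sigma_return => _ _ _ /(_ a) [_ /prefixP [q' Hp] _ _].
by exists (q' ++ q); rewrite mword_cons -catA IH catA Hp catA.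
Qed.

Lemma sigma_suffix_free a b t : sigma b = t ++ sigma a -> t = [::].
Proof.
case: t => [//|x t] E; exfalso.
have [q Hq] := mword_cat_return [:: a]; rewrite mword1 in Hq.
apply: (@no_inner_occurrence b [::] (x :: t) q) => //.
- by rewrite cats0 E -catA Hq.
- by rewrite E size_cat; have := size_sigma_gt0 a; lia.
Qed.

Lemma mword_occurrence_cut Z L R : ms Z ++ w = L ++ w ++ R ->
  exists Zp Zs, Z = Zp ++ Zs /\ ms Zp = L.
Proof.
elim: Z L => [|z Z IH] L.
  case: L => [|y L] E; first by exists [::], [::].
  by have := congr1 size E; rewrite /= !size_cat; lia.
case: L => [|y L]; first by exists [::], (z :: Z).
rewrite mword_cons -catA => E.
have [hle|hlt] := leqP (size (sigma z)) (size (y :: L)).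
  have [m [Em E2]] := cat_split E hle.
  have [Zp [Zs [-> Hm]]] := IH m E2.
  by exists (z :: Zp), Zs; rewrite mword_cons Em Hm.
have [q Hq] := mword_cat_return Z.
by exfalso; apply: (@no_inner_occurrence z q (y :: L) R) => //; rewrite -Hq.
Qed.

Lemma mword_suffix_cut v Zp L : ms Zp = L ++ ms v ->
  exists Zq, Zp = Zq ++ v /\ ms Zq = L.
Proof.
elim/last_ind: v Zp L => [|v e IH] Zp L.
  by rewrite cats0 => <-; exists Zp; rewrite cats0.
case/lastP: Zp => [|Zp z].
  move=> /(congr1 size); rewrite mword_rcons !size_cat /=.
  by have := size_sigma_gt0 e; lia.
rewrite !mword_rcons catA => E.
have ez : e = z.
  have := congr1 size E; rewrite !size_cat => hs.
  have [hle|hlt] := leqP (size (sigma z)) (size (sigma e)).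
    have h : size (L ++ ms v) <= size (ms Zp) by rewrite size_cat; lia.
    have [m [_ E']] := cat_split (esym E) h.
    by move: (E'); rewrite (sigma_suffix_free E') => /sigma_inj ->.
  have h : size (ms Zp) <= size (L ++ ms v) by rewrite size_cat; lia.
  have [m [_ E']] := cat_split E h.
  by move: (E'); rewrite (sigma_suffix_free E') => /sigma_inj ->.
subst z; have [Zq [-> <-]] := IH _ _ (catr_inj E).
by exists Zq; rewrite rcons_cat.
Qed.

Lemma phiL_eq a g c s : sigma a = g ++ c :: s -> phiL sigma s a = c.
Proof.
move=> E; rewrite /phiL E size_cat /=.
have -> : (size g + (size s).+1 - size s).-1 = size g by lia.
by rewrite nth_cat ltnn subnn.
Qed.

Lemma phiR_eq b p d h : sigma b ++ w = p ++ d :: h -> phiR sigma w p b = d.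
Proof. by move=> E; rewrite /phiR E nth_cat ltnn subnn. Qed.

Lemma AL_of a g c s : sigma a = g ++ c :: s -> AL sigma s a.
Proof. by move=> E; exists (g ++ [:: c]); split; [case: g E | rewrite E -catA]. Qed.

Lemma AR_of b p d h : sigma b ++ w = p ++ d :: h -> AR sigma w p b.
Proof. by move=> E; exists (d :: h). Qed.

Lemma sigma_split_common_suffix a1 a2 : a1 != a2 -> exists g1 g2 c1 c2 s,
  [/\ c1 != c2, sigma a1 = g1 ++ c1 :: s & sigma a2 = g2 ++ c2 :: s].
Proof.
move=> ne12; rewrite -(inj_eq sigma_inj) in ne12.
have [x' [y' [E1 E2 H]]] := lcp_split (rev (sigma a1)) (rev (sigma a2)).
set l := lcp _ _ in E1 E2.
have F1 : sigma a1 = rev x' ++ rev l by rewrite -rev_cat -E1 revK.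
have F2 : sigma a2 = rev y' ++ rev l by rewrite -rev_cat -E2 revK.
case: H => [x0|y0|[c1 [c2 [x'' [y'' [hc ex ey]]]]]].
- have F : sigma a2 = rev y' ++ sigma a1 by rewrite F2 F1 x0.
  by move: ne12; rewrite F (sigma_suffix_free F) /= eqxx.
- have F : sigma a1 = rev x' ++ sigma a2 by rewrite F1 F2 y0.
  by move: ne12; rewrite F (sigma_suffix_free F) /= eqxx.
exists (rev x''), (rev y''), c1, c2, (rev l); split => //.
- by rewrite F1 ex rev_cons cat_rcons.
- by rewrite F2 ey rev_cons cat_rcons.
Qed.

Lemma sigma_split_common_prefix b1 b2 : b1 != b2 -> exists h1 h2 d1 d2 q,
  [/\ d1 != d2, sigma b1 ++ w = (w ++ q) ++ d1 :: h1
              & sigma b2 ++ w = (w ++ q) ++ d2 :: h2].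
Proof.
move=> ne12; rewrite -(inj_eq sigma_inj) in ne12.
have [r1 Hr1] := mword_cat_return [:: b1]; have [r2 Hr2] := mword_cat_return [:: b2].
rewrite !mword1 in Hr1 Hr2.
have Hw : lcp (sigma b1 ++ w) (sigma b2 ++ w) = w ++ lcp r1 r2.
  by rewrite Hr1 Hr2 lcp_catl.
have [x' [y' [E1 E2 H]]] := lcp_split (sigma b1 ++ w) (sigma b2 ++ w).
rewrite Hw in E1 E2.
have not_prefix bi bj t : sigma bi != sigma bj ->
    sigma bj ++ w = (sigma bi ++ w) ++ t -> False.
  case: t => [|y t] nij; first by rewrite cats0 => /catr_inj E; rewrite E eqxx in nij.
  move=> E; apply: (@no_inner_occurrence bj [::] (sigma bi) (y :: t)).
  - by rewrite cats0 E catA.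
  - exact: size_sigma_gt0.
  - by have := congr1 size E; rewrite !size_cat /=; lia.
case: H => [x0|y0|[d1 [d2 [x'' [y'' [hd ex ey]]]]]].
- by rewrite x0 cats0 in E1; rewrite -E1 in E2; case: (not_prefix _ _ _ ne12 E2).
- rewrite y0 cats0 in E2; rewrite -E2 in E1.
  by rewrite eq_sym in ne12; case: (not_prefix _ _ _ ne12 E1).
by exists x'', y'', d1, d2, (lcp r1 r2); rewrite E1 E2 ex ey.
Qed.

Lemma sigma_last_letter a0 a Z L c s : AL sigma s a0 ->
  ms Z ++ sigma a = L ++ c :: s -> exists g, sigma a = g ++ c :: s.
Proof.
move=> [g0 [g0n Ha0]] E; have hs := congr1 size E; rewrite !size_cat /= in hs.
have [hle|hlt] := leqP (size (sigma a)) (size s).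
  have h : size (L ++ [:: c]) <= size (ms Z) by rewrite size_cat /=; lia.
  have [m [_ Em]] := cat_split (esym (etrans E (catA L [:: c] s))) h.
  have : g0 ++ m = [::] by apply: (@sigma_suffix_free a a0); rewrite Ha0 Em catA.
  by case: g0 g0n {Ha0}.
have h : size (ms Z) <= size L by lia.
by have [m [_ Em]] := cat_split E h; exists m.
Qed.

Lemma sigma_first_letter b0 b q d t R : AR sigma w (w ++ q) b0 ->
  sigma b ++ w ++ t = (w ++ q) ++ d :: R -> exists h, sigma b ++ w = (w ++ q) ++ d :: h.
Proof.
move=> [h0 [h0n Hb0]] E; have hs := congr1 size E; rewrite !size_cat /= in hs.
have [hle|hlt] := leqP (size (sigma b ++ w)) (size (w ++ q)).
  have [m [Em _]] := cat_split (etrans (esym (catA _ _ _)) E) hle.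
  exfalso; apply: (@no_inner_occurrence b0 [::] (sigma b) (m ++ h0)).
  - by rewrite cats0 Hb0 Em -!catA.
  - exact: size_sigma_gt0.
  - have : 0 < size h0 by case: (h0) h0n.
    by have := congr1 size Hb0; rewrite Em !size_cat; lia.
have h : size ((w ++ q) ++ [:: d]) <= size (sigma b ++ w).
  by move: hlt; rewrite !size_cat /=; lia.
have E' : (sigma b ++ w) ++ t = ((w ++ q) ++ [:: d]) ++ R by rewrite -catA E -!catA.
by have [m [Em _]] := cat_split (esym E') h; exists m; rewrite Em -catA.
Qed.

Lemma desubstitution Z L R c s v q d a0 b0 :
  ms Z ++ w = L ++ c :: s ++ ms v ++ (w ++ q) ++ d :: R ->
  AL sigma s a0 -> AR sigma w (w ++ q) b0 ->
  exists a b, [/\ exists Z1 Z2, Z = Z1 ++ a :: v ++ b :: Z2,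
                  exists g, sigma a = g ++ c :: s
                & exists h, sigma b ++ w = (w ++ q) ++ d :: h].
Proof.
move=> E HAL HAR.
have E' : ms Z ++ w = (L ++ c :: s ++ ms v) ++ w ++ (q ++ d :: R).
  by rewrite E -!catA /= -!catA.
have [Zp [Zs [EZ Hp]]] := mword_occurrence_cut E'.
have [Zq [EZp Hq]] : exists Zq, Zp = Zq ++ v /\ ms Zq = L ++ c :: s.
  by apply: mword_suffix_cut; rewrite Hp -catA.
have Rs : ms Zs ++ w = (w ++ q) ++ d :: R.
  apply: (@catl_inj _ (L ++ c :: s ++ ms v)); move: E.
  by rewrite EZ mword_cat Hp -!catA /= -!catA.
case/lastP: Zq EZp Hq => [|Zq a] EZp Hq.
  by have := congr1 size Hq; rewrite size_cat /=; lia.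
rewrite mword_rcons in Hq; have [g Hg] := sigma_last_letter HAL Hq.
case: Zs EZ Rs => [|b Zs] EZ Rs.
  by have := congr1 size Rs; rewrite /= !size_cat /=; lia.
have [t Ht] := mword_cat_return Zs.
rewrite mword_cons -catA Ht in Rs; have [h Hh] := sigma_first_letter HAR Rs.
exists a, b; split; [|by exists g|by exists h].
by exists Zq, Zs; rewrite EZ EZp -cats1 -!catA.
Qed.

Lemma lang_sigma_dot_mword X Z L t R :
  lang X Z -> ms Z ++ w = L ++ t ++ R -> lang (sigma_dot sigma X) t.
Proof.
move=> [x [Xx [i Ei]]] E.
set y := win x (i + (size Z)%:Z)%R (size w).
have [q Hq] := mword_cat_return y.
have [r [Er _]] := cat_split (esym Hq) (size_mword_win sigma_non_erasing _ _ _ : size w <= _).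
have := lang_sigma_dot_mword_win sigma_non_erasing i (size Z + size w) Xx.
by rewrite win_cat mword_cat Ei -/y Er catA E -!catA; apply: lang_factor.
Qed.

Lemma ext_sigma_dot_desubstitution X v s q c d a0 b0 :
  ext (sigma_dot sigma X) (s ++ ms v ++ (w ++ q)) c d ->
  AL sigma s a0 -> AR sigma w (w ++ q) b0 ->
  exists a b, [/\ ext X v a b, exists g, sigma a = g ++ c :: s
                & exists h, sigma b ++ w = (w ++ q) ++ d :: h].
Proof.
move=> /(lang_sigma_dot_factor sigma_non_erasing) [Z [L [R [LZ EZ]]]] HAL HAR.
have E : ms Z ++ w = L ++ c :: s ++ ms v ++ (w ++ q) ++ d :: (R ++ w).
  by rewrite EZ -!catA /= -!catA.
have [a [b [[Z1 [Z2 EZ2]] G H]]] := desubstitution E HAL HAR.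
exists a, b; split => //; apply: (@lang_factor _ _ Z1 _ Z2).
by rewrite /= -catA -EZ2.
Qed.

Lemma ext_sigma_dot_image X v a b g c s p d h : ext X v a b ->
  sigma a = g ++ c :: s -> sigma b ++ w = p ++ d :: h ->
  ext (sigma_dot sigma X) (s ++ ms v ++ p) c d.
Proof.
move=> Xv G H; apply: (lang_sigma_dot_mword (L := g) (R := h) Xv).
by rewrite mword_cons mword_cat mword1 G -!catA H /= -!catA.
Qed.

Variables preL preR leL leR : rel A.
Hypothesis sigma_planar_preserving : planar_preserving sigma w preL preR leL leR.

Lemma phiL_monotone a1 a2 g1 g2 c1 c2 s : c1 != c2 ->
  sigma a1 = g1 ++ c1 :: s -> sigma a2 = g2 ++ c2 :: s -> preL a1 a2 -> leL c1 c2.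
Proof.
move=> cne G1 G2 hp.
have ane : a1 != a2.
  by apply: contraNneq cne => ea; rewrite -(phiL_eq G1) -(phiL_eq G2) ea.
have TLs : TL sigma s by exists a1, a2; rewrite G1 G2 lcs_rcons_neq.
have := sigma_planar_preserving.1 s TLs a1 a2 (AL_of G1) (AL_of G2) hp ane.
by rewrite (phiL_eq G1) (phiL_eq G2).
Qed.

Lemma phiR_monotone b1 b2 h1 h2 d1 d2 p : d1 != d2 ->
  sigma b1 ++ w = p ++ d1 :: h1 -> sigma b2 ++ w = p ++ d2 :: h2 ->
  preR b1 b2 -> leR d1 d2.
Proof.
move=> dne H1 H2 hp.
have bne : b1 != b2.
  by apply: contraNneq dne => eb; rewrite -(phiR_eq H1) -(phiR_eq H2) eb.
have TRp : TR sigma w p by exists b1, b2; rewrite H1 H2 lcp_cons_neq.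
have := sigma_planar_preserving.2 p TRp b1 b2 (AR_of H1) (AR_of H2) hp bne.
by rewrite (phiR_eq H1) (phiR_eq H2).
Qed.

Hypotheses (preL_total : total preL) (leL_anti : antisymmetric leL).
Hypotheses (preR_refl : reflexive preR) (preR_total : total preR).
Hypotheses (leR_refl : reflexive leR) (leR_anti : antisymmetric leR).

Lemma planar_ext_images X v : planar X preL preR v ->
  forall u, ext_image sigma w X v u -> planar (sigma_dot sigma X) leL leR u.
Proof.
move=> Hv u [s [p [[q ->] [-> [[a0 [b0 [_ [HAL HAR]]]] _]]]]] c1 d1 c2 d2 E1 E2 hc cne.
have [a1 [b1 [X1 [g1 G1] [h1 H1]]]] := ext_sigma_dot_desubstitution E1 HAL HAR.
have [a2 [b2 [X2 [g2 G2] [h2 H2]]]] := ext_sigma_dot_desubstitution E2 HAL HAR.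
have [->|dne] := eqVneq d1 d2; first exact: leR_refl.
case/orP: (preL_total a1 a2) => ha.
  apply: (phiR_monotone dne H1 H2); apply: Hv X1 X2 ha _.
  by apply: contraNneq cne => ea; rewrite -(phiL_eq G1) -(phiL_eq G2) ea.
have h21 : leL c2 c1 by apply: phiL_monotone G2 G1 ha; rewrite eq_sym.
by case/negP: cne; apply/eqP/leL_anti; rewrite hc h21.
Qed.

Lemma planar_of_planar_ext_images X v :
  (forall u, ext_image sigma w X v u -> planar (sigma_dot sigma X) leL leR u) ->
  planar X preL preR v.
Proof.
move=> Himg a1 b1 a2 b2 X1 X2 ha ane.
have [->|bne] := eqVneq b1 b2; first exact: preR_refl.
case/orP: (preR_total b1 b2) => // hb.
have [g1 [g2 [c1 [c2 [s [cne G1 G2]]]]]] := sigma_split_common_suffix ane.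
have [h1 [h2 [d1 [d2 [q [dne H1 H2]]]]]] := sigma_split_common_prefix bne.
have E1 := ext_sigma_dot_image X1 G1 H1; have E2 := ext_sigma_dot_image X2 G2 H2.
have hu : ext_image sigma w X v (s ++ ms v ++ (w ++ q)).
  exists s, (w ++ q); split; first by exists q.
  split=> //; split; last exact: (@lang_factor _ _ [:: c1] _ [:: d1]).
  by exists a1, b1; split=> //; split; [exact: AL_of G1 | exact: AR_of H1].
have hd12 := Himg _ hu c1 d1 c2 d2 E1 E2 (phiL_monotone cne G1 G2 ha) cne.
have hd21 : leR d2 d1 by apply: phiR_monotone H2 H1 hb; rewrite eq_sym.
by case/negP: dne; apply/eqP/leR_anti; rewrite hd12 hd21.
Qed.

End ReturnMorphism.

Theorem mainTheorem19 (A : finType) (X : (int -> A) -> Prop) (sigma : A -> seq A)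
  (w : seq A) (preL preR leL leR : rel A) :
  is_shift_space X ->
  is_return_morphism sigma w ->
  (forall w', is_return_morphism sigma w' -> size w' <= size w) ->
  total_order preL -> total_order preR -> total_order leL -> total_order leR ->
  planar_preserving sigma w preL preR leL leR ->
  forall v, lang X v ->
    (planar X preL preR v <->
     forall u, ext_image sigma w X v u -> planar (sigma_dot sigma X) leL leR u).
Proof.
move=> _ Hret _ [_ _ _ preL_total] [preR_refl _ _ preR_total] [_ leL_anti _ _]
  [leR_refl leR_anti _ _] Hpp v _.
split; first exact: (planar_ext_images Hret Hpp preL_total leL_anti leR_refl).
exact: (planar_of_planar_ext_images Hret Hpp preR_refl preR_total leR_anti).
Qed.
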